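(* Let $\mathsf{X}\subset\mathbb{R}^p$, $\mathsf{Y}\subset\mathbb{R}^q$, let $\tilde s(x\mid\gamma)$ and $\tilde h(\gamma\mid x)$ be conditional pdfs on $\mathsf{X}$ and $\mathsf{Y}$ respectively, and let $\{\Psi_m\}$ be the Markov chain on $\mathsf{X}$ with transition density $k(x,x')=\int_{\mathsf{Y}}\tilde s(x'\mid\gamma)\tilde h(\gamma\mid x)d\gamma$ (transition function $K$, invariant probability $\Pi$) and $\{\tilde\Psi_m\}$ the Markov chain on $\mathsf{Y}$ with transition density $\tilde k(\gamma,\gamma')=\int_{\mathsf{X}}\tilde h(\gamma'\mid x)\tilde s(x\mid\gamma)dx$ (transition function $\tilde K$, invariant probability $\tilde\Pi$), both Harris ergodic. Suppose there is $R:\mathsf{Y}\times\mathbb{Z}_+\to(0,\infty)$ such that for every initial distribution $\tilde\nu$ of $\tilde\Psi_0$ and all $m\ge0$, $\|\tilde\nu\tilde K^m-\tilde\Pi\|_{TV}\le\mathbb{E}_{\tilde\nu}R(\tilde\Psi_0,m)$. Then for every initial distribution $\nu$ of $\Psi_0$ and all $m\ge1$, $\|\nu K^m-\Pi\|_{TV}\le\mathbb{E}_\nu\Big(\int_{\mathsf{Y}}R(\gamma,m-1)\tilde h(\gamma\mid\Psi_0)d\gamma\Big)$.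
   Context: $\nu K^m(\cdot)=\int K^m(x,\cdot)\nu(dx)$; $\|\cdot\|_{TV}$ is the total variation norm, taken as the $L^1$ distance between densities (the same convention on both sides). *)

From HB Require Import structures.
From mathcomp Require Import all_boot all_order all_algebra.
From mathcomp Require Import all_classical all_reals all_analysis.
Set Implicit Arguments. Unset Strict Implicit. Unset Printing Implicit Defensive.
Import Order.TTheory GRing.Theory Num.Theory.
Local Open Scope classical_set_scope.
Local Open Scope ring_scope.
Local Open Scope ereal_scope.

Section MarkovDefs.
Context {d : measure_display} {T : measurableType d} {R : realType}.
Variable mu : {measure set T -> \bar R}.
Variable k : T -> T -> \bar R.

Definition kop (f : T -> \bar R) (x : T) : \bar R :=
  \int[mu]_y (k x y * f y).

Definition kpow (n : nat) (x : T) (A : set T) : \bar R :=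
  iter n kop (fun y => (\1_A y)%:E) x.

Definition mpow (nu : {measure set T -> \bar R}) (n : nat) (A : set T) : \bar R :=
  \int[nu]_x kpow n x A.

Definition tvd (m1 m2 : set T -> \bar R) : \bar R :=
  ereal_sup [set r | exists (n : nat) (A : 'I_n -> set T),
     [/\ forall i, measurable (A i), trivIset setT A,
         \bigcup_(i in setT) A i = setT &
         r = \sum_(i < n) `|m1 (A i) - m2 (A i)| ] ].

Fixpoint avoid (A : set T) (n : nat) : T -> \bar R :=
  match n with
  | 0 => fun _ => 1
  | n'.+1 => kop (fun y => (\1_(~` A) y)%:E * avoid A n' y)
  end.

Definition hitL (A : set T) (x : T) : \bar R :=
  ereal_sup [set 1 - avoid A n x | n in [set: nat]].

Definition hitQ (A : set T) (x : T) : \bar R :=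
  ereal_inf [set iter N kop (hitL A) x | N in [set: nat]].

Definition kinvariant (P : {measure set T -> \bar R}) : Prop :=
  forall A, measurable A -> mpow P 1 A = P A.

Definition irr_measure (phi : {measure set T -> \bar R}) : Prop :=
  0 < phi setT /\ forall A, measurable A -> 0 < phi A -> forall x, 0 < hitL A x.

Definition max_irr_measure (psi : {measure set T -> \bar R}) : Prop :=
  irr_measure psi /\ forall phi, irr_measure phi ->
    forall A, measurable A -> psi A = 0 -> phi A = 0.

Definition psi_irreducible : Prop := exists psi, max_irr_measure psi.

Definition aperiodic : Prop :=
  forall psi, max_irr_measure psi -> forall (n : nat), (2 <= n)%N ->
  ~ exists D : nat -> set T,
     [/\ forall i, measurable (D i),
         forall i j, (i < n)%N -> (j < n)%N -> i <> j -> D i `&` D j = set0,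
         forall i x, (i < n)%N -> D i x -> kpow 1 x (D (i.+1 %% n)%N) = 1 &
         psi (~` \bigcup_(i in `I_n) D i) = 0].

Definition harris_recurrent : Prop :=
  exists psi, max_irr_measure psi /\
    forall A, measurable A -> 0 < psi A -> forall x, hitQ A x = 1.

Definition harris_ergodic : Prop :=
  [/\ psi_irreducible, aperiodic & harris_recurrent].

End MarkovDefs.

(* The X-chain factors as K = H S and the Y-chain as K~ = S H, where H moves x to
   gamma ~ h~(. | x) and S moves gamma to x ~ s~(. | gamma).  Hence
   nu K^m = (nu H) K~^(m-1) S, and Pi = Pi~ S because Pi H is K~-invariant while a
   psi-irreducible chain has at most one invariant density: two different ones would
   produce two disjoint nonempty absorbing sets.  Since S is a Markov kernel it
   contracts total variation, so
   ||nu K^m - Pi|| <= ||(nu H) K~^(m-1) - Pi~|| <= E_(nu H) R(., m-1),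
   which is the claimed bound. *)

From HB Require Import structures.
From mathcomp Require Import all_boot all_order all_algebra.
From mathcomp Require Import all_classical all_reals all_analysis.
From mathcomp Require Import measurable_realfun lra.
Import Order.TTheory GRing.Theory Num.Theory.
Local Open Scope classical_set_scope.
Local Open Scope ring_scope.
Local Open Scope ereal_scope.

Local Notation eindic A := (fun y => (\1_A y)%:E).

Lemma measurable_eindic {R : realType} {d} {T : measurableType d} {A : set T} :
  measurable A -> measurable_fun setT (eindic A : T -> \bar R).
Proof. by move=> mA; exact/measurable_EFinP/measurable_indic. Qed.

Section ereal_lemmas.
Context {R : realType}.

Lemma fin_num_addeI (a b c : \bar R) : a \is a fin_num -> a + b = a + c -> b = c.
Proof. by move=> fa /(congr1 (fun z => z - a)); rewrite ![a + _]addeC !addeK. Qed.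

Lemma lee_abs_sub_split (a a' b b' : \bar R) :
  a \is a fin_num -> a' \is a fin_num -> b \is a fin_num -> b' \is a fin_num ->
  b <= a -> a' <= b' -> `|(a + a') - (b + b')| <= (a + b') - (b + a').
Proof.
case: a => [a||]//; case: a' => [a'||]//; case: b => [b||]//; case: b' => [b'||]// _ _ _ _.
by rewrite !lee_fin => ba ab /=; rewrite ler_norml; apply/andP; split; lra.
Qed.

Lemma lee_sub_split_abs (a b c e : \bar R) :
  a \is a fin_num -> b \is a fin_num -> c \is a fin_num -> e \is a fin_num ->
  (a + b) - (c + e) <= `|a - c| + `|e - b|.
Proof.
case: a => [a||]//; case: b => [b||]//; case: c => [c||]//; case: e => [e||]// _ _ _ _ /=.
rewrite lee_fin (distrC e b); have := ler_norm (a - c); have := ler_norm (b - e); lra.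
Qed.

Lemma fin_num_sumeB n (x y : 'I_n -> \bar R) :
  (forall i, x i \is a fin_num) -> (forall i, y i \is a fin_num) ->
  \sum_(i < n) (x i - y i) = \sum_(i < n) x i - \sum_(i < n) y i.
Proof.
move=> fx fy; rewrite big_split /= sumeN// => i j _ _.
by rewrite fin_num_adde_defl// fy.
Qed.

End ereal_lemmas.

Section integral_tools.
Context {R : realType}.

Lemma measurable_fun_integral_snd {d1 d2} {T1 : measurableType d1} {T2 : measurableType d2}
    (m2 : {sigma_finite_measure set T2 -> \bar R}) (k : T1 -> T2 -> \bar R) :
  measurable_fun setT (fun z : T1 * T2 => k z.1 z.2) -> (forall x y, 0 <= k x y) ->
  measurable_fun setT (fun x => \int[m2]_y k x y).
Proof.
by move=> mk k0; exact: (measurable_fun_fubini_tonelli_F (fun z : T1 * T2 => k z.1 z.2)).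
Qed.

Lemma measurable_fun_integral_fst {d1 d2} {T1 : measurableType d1} {T2 : measurableType d2}
    (m1 : {sigma_finite_measure set T1 -> \bar R}) (k : T1 -> T2 -> \bar R) :
  measurable_fun setT (fun z : T1 * T2 => k z.1 z.2) -> (forall x y, 0 <= k x y) ->
  measurable_fun setT (fun y => \int[m1]_x k x y).
Proof.
by move=> mk k0; exact: (measurable_fun_fubini_tonelli_G (fun z : T1 * T2 => k z.1 z.2)).
Qed.

Lemma fubini_tonelli_kernel {d1 d2} {T1 : measurableType d1} {T2 : measurableType d2}
    (m1 : {sigma_finite_measure set T1 -> \bar R})
    (m2 : {sigma_finite_measure set T2 -> \bar R})
    (k : T1 -> T2 -> \bar R) (f : T2 -> \bar R) :
  measurable_fun setT (fun z : T1 * T2 => k z.1 z.2) -> (forall x y, 0 <= k x y) ->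
  measurable_fun setT f -> (forall y, 0 <= f y) ->
  \int[m1]_x \int[m2]_y (k x y * f y) = \int[m2]_y ((\int[m1]_x k x y) * f y).
Proof.
move=> mk k0 mf f0.
have mkf : measurable_fun [set: T1 * T2] (fun z : T1 * T2 => k z.1 z.2 * f z.2).
  by apply: emeasurable_funM => //; exact: measurableT_comp mf measurable_snd.
rewrite (fubini_tonelli _ mkf) /=; last by move=> z; exact: mule_ge0.
apply: eq_integral => y _; rewrite ge0_integralZr //.
exact: measurableT_comp mk (pair2_measurable y).
Qed.

Lemma integral_density {d} {T : measurableType d} (nu : {finite_measure set T -> \bar R})
    (mu : {sigma_finite_measure set T -> \bar R}) (g f : T -> \bar R) :
  measurable_fun setT g -> (forall x, 0 <= g x) ->
  (forall A, measurable A -> nu A = \int[mu]_(x in A) g x) ->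
  measurable_fun setT f -> (forall x, 0 <= f x) ->
  \int[nu]_x f x = \int[mu]_x (f x * g x).
Proof.
move=> mg g0 nuE mf f0.
have numu : nu `<< mu.
  apply/null_content_dominatesP => A mA muA0; rewrite nuE// null_set_integral//.
  exact: measurable_funS mg.
rewrite -(Radon_Nikodym_SigmaFinite.change_of_variables numu f0 measurableT mf).
have mRN := measurable_int _ (Radon_Nikodym_SigmaFinite.f_integrable numu).
apply: ae_eq_integral => //; [exact: emeasurable_funM|exact: emeasurable_funM|].
apply: ae_eqe_mul2l; apply: integral_ae_eq => //.
- exact: Radon_Nikodym_SigmaFinite.f_integrable.
- by move=> E _ mE; rewrite -Radon_Nikodym_SigmaFinite.f_integral// nuE.
Qed.

Lemma integral_eq_negligible_lt {d} {T : measurableType d} (mu : {measure set T -> \bar R})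
    {E : set T} {f g : T -> \bar R} :
  measurable E -> measurable_fun E f -> measurable_fun E g ->
  (forall x, E x -> 0 <= f x) -> (forall x, E x -> f x <= g x) ->
  \int[mu]_(x in E) f x \is a fin_num ->
  \int[mu]_(x in E) f x = \int[mu]_(x in E) g x ->
  mu.-negligible (E `&` [set x | f x < g x]).
Proof.
move=> mE mf mg f0 fg ffin fgE.
pose w x := g x - (fine (f x))%:E.
have finf x : E x -> f x < g x -> f x \is a fin_num.
  by move=> Ex fgx; rewrite ge0_fin_numE ?f0//; exact: lt_le_trans fgx (leey _).
have w0 x : E x -> 0 <= w x.
  move=> Ex; have := fg x Ex; have := f0 x Ex; rewrite /w.
  case: (f x) => [r| |] //= _; first by rewrite EFinN sube_ge0.
  by rewrite leye_eq => /eqP ->; rewrite oppr0 adde0 leey.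
have gE x : E x -> g x = f x + w x.
  move=> Ex; have := fg x Ex; have := f0 x Ex; rewrite /w.
  case: (f x) => [r| |] //= _; first by rewrite EFinN addeC subeK.
  by rewrite leye_eq => /eqP ->; rewrite oppr0 adde0.
have mw : measurable_fun E w.
  apply: emeasurable_funB => //; apply/measurable_EFinP.
  exact: measurableT_comp (fine_measurable _) mf.
have iw0 : \int[mu]_(x in E) w x = 0.
  apply: (@fin_num_addeI _ _ _ _ ffin); rewrite adde0 -ge0_integralD// fgE.
  by apply: eq_integral => x /[!inE] Ex; rewrite -gE.
have /(ae_eq_integral_abs mu mE mw).1 : \int[mu]_(x in E) `|w x| = 0.
  by rewrite -iw0; apply: eq_integral => x /[!inE] Ex; rewrite gee0_abs// w0.
move=> [N [mN N0 sN]]; exists N; split => // x [Ex /= fgx]; apply: sN => /= wx0.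
have := wx0 Ex; rewrite /w /cst.
move: fgx (finf x Ex fgx); case: (f x) => [r| |] //= + _.
case: (g x) => [t| |] //= rt /eqP; rewrite -EFinB eqe subr_eq0 => /eqP tr.
by move: rt; rewrite tr ltxx.
Qed.

End integral_tools.


Definition is_pdf {R : realType} {d} {T : measurableType d} (mu : {measure set T -> \bar R})
    (p : T -> \bar R) : Prop :=
  [/\ measurable_fun setT p, forall x, 0 <= p x & \int[mu]_x p x = 1].

(* The proof [hp] is carried along only to equip [density_prob hp] with its
   probability structure. *)
Definition density_prob {R : realType} {d} {T : measurableType d}
    {mu : {measure set T -> \bar R}} {p : T -> \bar R} (hp : is_pdf mu p) : set T -> \bar R :=
  fun A => \int[mu]_(x in A) p x.

Section density_prob_instance.
Context {R : realType} {d} {T : measurableType d} (mu : {measure set T -> \bar R}).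
Variables (p : T -> \bar R) (hp : is_pdf mu p).

Let density_prob0 : density_prob hp set0 = 0.
Proof. exact: integral_set0. Qed.

Let density_prob_ge0 A : 0 <= density_prob hp A.
Proof. by have [_ p0 _] := hp; exact: integral_ge0. Qed.

Let density_prob_sigma_additive : semi_sigma_additive (density_prob hp).
Proof. by have [mp p0 _] := hp; exact: semi_sigma_additive_nng_induced. Qed.

HB.instance Definition _ := isMeasure.Build _ _ _ (density_prob hp)
  density_prob0 density_prob_ge0 density_prob_sigma_additive.

Let density_probT : density_prob hp setT = 1.
Proof. by have [_ _ p1] := hp. Qed.

HB.instance Definition _ := Measure_isProbability.Build _ _ _ (density_prob hp) density_probT.

End density_prob_instance.

Section pdf.
Context {R : realType} {d} {T : measurableType d} (mu : {measure set T -> \bar R}).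

Lemma pdf_integral_fin_num p (E : set T) :
  is_pdf mu p -> measurable E -> \int[mu]_(x in E) p x \is a fin_num.
Proof.
move=> [mp p0 p1] mE; rewrite ge0_fin_numE ?integral_ge0//.
by apply: (@le_lt_trans _ _ 1); [rewrite -p1; exact: ge0_subset_integral|exact: ltey].
Qed.

Lemma pdf_integral_mul_fin_num p g A : is_pdf mu p -> measurable A ->
  measurable_fun setT g -> (forall x, 0 <= g x) -> (forall x, g x <= 1) ->
  \int[mu]_(x in A) (p x * g x) \is a fin_num.
Proof.
move=> [mp p0 p1] mA mg g0 g1.
rewrite ge0_fin_numE; last by apply: integral_ge0 => x _; exact: mule_ge0.
apply: (@le_lt_trans _ _ (\int[mu]_(x in A) p x)); last first.
  apply: (@le_lt_trans _ _ (\int[mu]_x p x)); last by rewrite p1 ltey.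
  exact: ge0_subset_integral.
apply: ge0_le_integral => //.
- by move=> x _; exact: mule_ge0.
- by apply: emeasurable_funM; exact: measurable_funTS.
- exact: measurable_funTS.
- by move=> x _; rewrite -{2}(mule1 (p x)); exact: lee_wpmul2l.
Qed.

Lemma pdf_ae_eq_of_negligible_lt p1 p2 : is_pdf mu p1 -> is_pdf mu p2 ->
  mu.-negligible [set x | p2 x < p1 x] -> ae_eq mu setT p1 p2.
Proof.
move=> [mp1 p10 i1] [mp2 p20 i2] Nlt.
set P := [set x | p2 x < p1 x].
have mP : measurable P by rewrite -[P]setTI; exact: measurable_lte.
have intCP p : measurable_fun setT p -> (forall x, 0 <= p x) -> \int[mu]_x p x = 1 ->
    \int[mu]_(x in ~` P) p x = 1.
  move=> mp p0 <-; rewrite -[in RHS](setUv P) ge0_integral_setU ?setUv//.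
  - rewrite [X in _ = X + _]null_set_integral ?add0e//; first exact: measurable_funTS.
    exact: measure_negligible.
  - exact: measurableC.
  - by apply/disj_setPCl.
have Ngt : mu.-negligible (~` P `&` [set x | p1 x < p2 x]).
  apply: integral_eq_negligible_lt.
  - exact: measurableC.
  - exact: measurable_funTS.
  - exact: measurable_funTS.
  - by move=> x _; exact: p10.
  - by move=> x nPx; rewrite leNgt; exact/negP.
  - by rewrite intCP.
  - by rewrite !intCP.
apply: negligibleS (negligibleU Nlt Ngt) => x /= p12.
have [Px|nPx] := pselect (P x); [by left|right; split => //=].
by rewrite lt_neqAle leNgt; apply/andP; split; [apply/eqP => e; exact: p12|exact/negP].
Qed.

End pdf.

Lemma kop_indicE {R : realType} {d} {T : measurableType d} (mu : {measure set T -> \bar R})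
    (k : T -> T -> \bar R) (A : set T) x :
  kop mu k (eindic A) x = \int[mu]_(y in A) k x y.
Proof. by rewrite /kop [RHS]integral_mkcond epatch_indic. Qed.

Section density_kernel.
Context {R : realType} {d} {T : measurableType d} (mu : {sigma_finite_measure set T -> \bar R}).
Variable k : T -> T -> \bar R.
Hypothesis mk : measurable_fun setT (fun z : T * T => k z.1 z.2).
Hypothesis k0 : forall x y, 0 <= k x y.

Lemma measurable_kop f : measurable_fun setT f -> (forall x, 0 <= f x) ->
  measurable_fun setT (kop mu k f).
Proof.
move=> mf f0; apply: (measurable_fun_integral_snd mu (fun x y => k x y * f y)).
- by apply: emeasurable_funM => //; exact: measurableT_comp mf measurable_snd.
- by move=> x y; exact: mule_ge0.
Qed.

Lemma kop_ge0 f : (forall x, 0 <= f x) -> forall x, 0 <= kop mu k f x.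
Proof. by move=> f0 x; apply: integral_ge0 => y _; exact: mule_ge0. Qed.

Lemma iter_kop_ge0 n f : (forall x, 0 <= f x) -> forall x, 0 <= iter n (kop mu k) f x.
Proof. by move=> f0; elim: n => [//|n IH] x /=; exact: kop_ge0. Qed.

Lemma measurable_iter_kop n f : measurable_fun setT f -> (forall x, 0 <= f x) ->
  measurable_fun setT (iter n (kop mu k) f).
Proof.
move=> mf f0; elim: n => [//|n IH] /=.
by apply: measurable_kop => //; exact: iter_kop_ge0.
Qed.

Definition dens_step (p : T -> \bar R) y := \int[mu]_x (p x * k x y).

Lemma measurable_dens_step p : measurable_fun setT p -> (forall x, 0 <= p x) ->
  measurable_fun setT (dens_step p).
Proof.
move=> mp p0; apply: (measurable_fun_integral_fst mu (fun x y => p x * k x y)).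
- by apply: emeasurable_funM => //; exact: measurableT_comp mp measurable_fst.
- by move=> x y; exact: mule_ge0.
Qed.

Lemma dens_step_ge0 p : (forall x, 0 <= p x) -> forall y, 0 <= dens_step p y.
Proof. by move=> p0 y; apply: integral_ge0 => x _; exact: mule_ge0. Qed.

Lemma iter_dens_step_ge0 n p : (forall x, 0 <= p x) -> forall y, 0 <= iter n dens_step p y.
Proof. by move=> p0; elim: n => [//|n IH] y /=; exact: dens_step_ge0. Qed.

Lemma measurable_iter_dens_step n p : measurable_fun setT p -> (forall x, 0 <= p x) ->
  measurable_fun setT (iter n dens_step p).
Proof.
move=> mp p0; elim: n => [//|n IH] /=.
by apply: measurable_dens_step => //; exact: iter_dens_step_ge0.
Qed.

Lemma integral_mul_kop p v : measurable_fun setT p -> (forall x, 0 <= p x) ->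
    measurable_fun setT v -> (forall y, 0 <= v y) ->
  \int[mu]_x (p x * kop mu k v x) = \int[mu]_y (dens_step p y * v y).
Proof.
move=> mp p0 mv v0; rewrite /kop.
transitivity (\int[mu]_x \int[mu]_y (p x * k x y * v y)).
  apply: eq_integral => x _; rewrite -ge0_integralZl//.
  - by apply: eq_integral => y _; rewrite muleA.
  - by apply: emeasurable_funM => //; exact: measurableT_comp mk (pair1_measurable x).
  - by move=> y _; exact: mule_ge0.
apply: (fubini_tonelli_kernel mu mu (fun x y => p x * k x y)) => //.
- by apply: emeasurable_funM => //; exact: measurableT_comp mp measurable_fst.
- by move=> x y; exact: mule_ge0.
Qed.

Lemma integral_mul_iter_kop n p v : measurable_fun setT p -> (forall x, 0 <= p x) ->
    measurable_fun setT v -> (forall y, 0 <= v y) ->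
  \int[mu]_x (p x * iter n (kop mu k) v x) = \int[mu]_y (iter n dens_step p y * v y).
Proof.
move=> + + mv v0; elim: n p => [//|n IH] p mp p0 /=.
rewrite integral_mul_kop ?IH -?iterSr//.
- exact: measurable_dens_step.
- exact: dens_step_ge0.
- exact: measurable_iter_kop.
- exact: iter_kop_ge0.
Qed.

Lemma mpow_density_prob p (hp : is_pdf mu p) n B : measurable B ->
  mpow mu k (density_prob hp) n B = \int[mu]_(y in B) iter n dens_step p y.
Proof.
move=> mB; have [mp p0 _] := hp.
have mB1 : measurable_fun setT (eindic B : T -> \bar R) := measurable_eindic mB.
have B0 y : (0 : \bar R) <= (\1_B y)%:E by rewrite lee_fin.
rewrite /mpow /kpow (integral_density (density_prob hp) mu _ _ mp p0 (fun _ _ => erefl));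
  [|exact: measurable_iter_kop|exact: iter_kop_ge0].
rewrite [RHS]integral_mkcond epatch_indic -integral_mul_iter_kop//.
by apply: eq_integral => x _; rewrite muleC.
Qed.

Definition is_invariant_pdf (p : T -> \bar R) : Prop :=
  is_pdf mu p /\ forall B, measurable B ->
    \int[mu]_(y in B) p y = \int[mu]_x (p x * kop mu k (eindic B) x).

Section invariant_probability.
Variable P : probability T R.
Hypothesis P_inv : kinvariant mu k P.

Definition invariant_density y := \int[P]_x k x y.

Lemma measurable_invariant_density : measurable_fun setT invariant_density.
Proof. exact: (measurable_fun_integral_fst P k). Qed.

Lemma invariant_density_ge0 y : 0 <= invariant_density y.
Proof. exact: integral_ge0. Qed.

Lemma invariant_densityE A : measurable A -> P A = \int[mu]_(y in A) invariant_density y.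
Proof.
move=> mA; rewrite -P_inv// /mpow /kpow /= /kop (fubini_tonelli_kernel P mu k) //.
  by rewrite [RHS]integral_mkcond epatch_indic.
exact: measurable_eindic.
Qed.

Lemma integral_kop_invariant f : measurable_fun setT f -> (forall x, 0 <= f x) ->
  \int[P]_x kop mu k f x = \int[P]_x f x.
Proof.
move=> mf f0; rewrite /kop (fubini_tonelli_kernel P mu k) //.
rewrite (integral_density P mu _ _ measurable_invariant_density invariant_density_ge0)//.
- by apply: eq_integral => y _; rewrite muleC.
- exact: invariant_densityE.
Qed.

Lemma invariant_density_invariant_pdf : is_invariant_pdf invariant_density.
Proof.
have mI := measurable_invariant_density; have I0 := invariant_density_ge0.
split; first by split => //; rewrite -invariant_densityE// probability_setT.
move=> B mB; rewrite -invariant_densityE// -P_inv// /mpow /kpow /=.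
rewrite (integral_density P mu _ _ mI I0).
- by apply: eq_integral => x _; rewrite muleC.
- exact: invariant_densityE.
- by apply: measurable_kop => //; exact: measurable_eindic.
- by apply: kop_ge0 => // y; rewrite lee_fin.
Qed.

End invariant_probability.
End density_kernel.

Section stochastic_density_kernel.
Context {R : realType} {d} {T : measurableType d} (mu : {sigma_finite_measure set T -> \bar R}).
Variable k : T -> T -> \bar R.
Hypothesis mk : measurable_fun setT (fun z : T * T => k z.1 z.2).
Hypothesis k0 : forall x y, 0 <= k x y.
Hypothesis k1 : forall x, \int[mu]_y k x y = 1.

Lemma kop_indic_le1 B x : measurable B -> kop mu k (eindic B) x <= 1.
Proof.
move=> mB; rewrite kop_indicE -(k1 x); apply: ge0_subset_integral => //.
exact: measurableT_comp mk (pair1_measurable x).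
Qed.

Lemma kop_indic_fin_num B x : measurable B -> kop mu k (eindic B) x \is a fin_num.
Proof.
move=> mB; rewrite ge0_fin_numE ?kop_ge0//.
by apply: (@le_lt_trans _ _ 1); [exact: kop_indic_le1|rewrite ltey].
Qed.

Lemma iter_kop_cst1 n : iter n (kop mu k) (cst 1) = cst 1.
Proof.
elim: n => [//|n /= ->]; apply/funext => x; rewrite /kop -[RHS](k1 x).
by apply: eq_integral => y _; rewrite mule1.
Qed.

Lemma is_pdf_iter_dens_step n p : is_pdf mu p -> is_pdf mu (iter n (dens_step mu k) p).
Proof.
move=> [mp p0 p1]; split; [exact: measurable_iter_dens_step|exact: iter_dens_step_ge0|].
rewrite -p1; transitivity (\int[mu]_y (iter n (dens_step mu k) p y * cst 1 y)).
  by apply: eq_integral => y _; rewrite mule1.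
rewrite -integral_mul_iter_kop// iter_kop_cst1.
by apply: eq_integral => x _; rewrite mule1.
Qed.

Lemma invariant_pdf_balance p P : is_invariant_pdf mu k p -> measurable P ->
  \int[mu]_(x in P) (p x * (1 - kop mu k (eindic P) x)) =
  \int[mu]_(x in ~` P) (p x * kop mu k (eindic P) x).
Proof.
move=> [hp p_inv] mP; have [mp p0 _] := hp; have mCP := measurableC mP.
set u := kop mu k (eindic P).
have mu_ : measurable_fun setT u by apply: measurable_kop => //; exact: measurable_eindic.
have u0 x : 0 <= u x by exact: kop_ge0.
have q0 x : 0 <= 1 - u x by rewrite sube_ge0 ?kop_indic_fin_num ?kop_indic_le1.
have mpu : measurable_fun setT (fun x => p x * u x) by exact: emeasurable_funM.
have mpq : measurable_fun setT (fun x => p x * (1 - u x)).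
  by apply: emeasurable_funM => //; apply: emeasurable_funB => //; exact: measurable_cst.
apply: (@fin_num_addeI _ (\int[mu]_(x in P) (p x * u x))).
  apply: pdf_integral_mul_fin_num => // x; exact: kop_indic_le1.
rewrite -ge0_integralD//; try by move=> x _; exact: mule_ge0.
- under eq_integral do rewrite -ge0_muleDr// addeC subeK ?kop_indic_fin_num// mule1.
  rewrite p_inv// -ge0_integral_setU ?setUv//; first by move=> x _; exact: mule_ge0.
  by apply/disj_setPCl.
- exact: measurable_funTS.
- exact: measurable_funTS.
Qed.

Lemma invariant_pdf_lt_escape_negligible p1 p2 :
  is_invariant_pdf mu k p1 -> is_invariant_pdf mu k p2 ->
  mu.-negligible [set x | p2 x < p1 x /\ kop mu k (eindic [set y | (p2 y < p1 y)%E]) x != 1].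
Proof.
move=> ip1 ip2; have [[mp1 p10 _] _] := ip1; have [[mp2 p20 _] _] := ip2.
set P := [set y | p2 y < p1 y].
have mP : measurable P by rewrite -[P]setTI; exact: measurable_lte.
have mCP := measurableC mP.
set u := kop mu k (eindic P).
have mu_ : measurable_fun setT u by apply: measurable_kop => //; exact: measurable_eindic.
have u0 x : 0 <= u x by exact: kop_ge0.
have q0 x : 0 <= 1 - u x by rewrite sube_ge0 ?kop_indic_fin_num ?kop_indic_le1.
have q1 x : 1 - u x <= 1 by rewrite leeBlDr ?kop_indic_fin_num// leeDl.
have mq : measurable_fun setT (fun x => 1 - u x).
  by apply: emeasurable_funB => //; exact: measurable_cst.
have mpq1 : measurable_fun P (fun x => p1 x * (1 - u x)).
  by apply: measurable_funTS; exact: emeasurable_funM.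
have mpq2 : measurable_fun P (fun x => p2 x * (1 - u x)).
  by apply: measurable_funTS; exact: emeasurable_funM.
have pq_le x : P x -> p2 x * (1 - u x) <= p1 x * (1 - u x).
  by move=> Px; apply: lee_wpmul2r => //; exact: ltW.
(* The balance identities squeeze [int_P p2 (1 - u) <= int_P p1 (1 - u)
   = int_(~P) p1 u <= int_(~P) p2 u = int_P p2 (1 - u)]. *)
have pqE : \int[mu]_(x in P) (p2 x * (1 - u x)) = \int[mu]_(x in P) (p1 x * (1 - u x)).
  apply/eqP; rewrite eq_le ge0_le_integral//=; last by move=> x _; exact: mule_ge0.
  rewrite (invariant_pdf_balance _ _ ip1 mP) (invariant_pdf_balance _ _ ip2 mP).
  apply: ge0_le_integral => //.
  - by move=> x _; exact: mule_ge0.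
  - by apply: measurable_funTS; exact: emeasurable_funM.
  - by apply: measurable_funTS; exact: emeasurable_funM.
  - by move=> x nPx; apply: lee_wpmul2r => //; rewrite leNgt; exact/negP.
have pq2_fin := pdf_integral_mul_fin_num _ _ _ _ ip2.1 mP mq q0 q1.
have [N [mN N0 PN]] := integral_eq_negligible_lt mu mP mpq2 mpq1
  (fun x _ => mule_ge0 (p20 x) (q0 x)) pq_le pq2_fin pqE.
exists N; split => // x /= [Px ux1]; apply: PN; split => //=.
rewrite lte_pmul2r//; first by rewrite fin_numB kop_indic_fin_num.
by rewrite sube_gt0 lt_neqAle ux1 kop_indic_le1.
Qed.

Lemma invariant_pdf_lt_absorbing p1 p2 :
  is_invariant_pdf mu k p1 -> is_invariant_pdf mu k p2 ->
  exists Q, [/\ measurable Q, Q `<=` [set x | p2 x < p1 x],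
    mu.-negligible ([set x | p2 x < p1 x] `\` Q) &
    forall x, Q x -> kop mu k (eindic Q) x = 1].
Proof.
move=> ip1 ip2; have [[mp1 _ _] _] := ip1; have [[mp2 _ _] _] := ip2.
set P := [set y | p2 y < p1 y].
have mP : measurable P by rewrite -[P]setTI; exact: measurable_lte.
have [N [mN N0 PN]] := invariant_pdf_lt_escape_negligible _ _ ip1 ip2.
have uP1 x : P x -> ~ N x -> kop mu k (eindic P) x = 1.
  by move=> Px nNx; apply/eqP/negPn/negP => ux1; apply: nNx; apply: PN; split.
exists (P `\` N); split => //.
- exact: measurableD.
- by exists N; split => // x [Px nPNx]; apply: contrapT => nNx; exact: nPNx.
move=> x [Px nNx]; rewrite -(uP1 x Px nNx) !kop_indicE -[in RHS](setUIDK P N).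
have mkx : measurable_fun setT (k x) by exact: measurableT_comp mk (pair1_measurable x).
rewrite ge0_integral_setU//.
- rewrite [X in _ = X + _]null_set_integral ?add0e//.
  + exact: measurableI.
  + exact: measurable_funTS.
  + exact: subset_measure0 (measurableI _ _ mP mN) mN (@subIsetr _ _ _) N0.
- exact: measurableI.
- exact: measurableD.
- by rewrite setUIDK; exact: measurable_funTS.
- by apply/eqP/seteqP; split => // y [[_ Ny] [_ /(_ Ny)]].
Qed.

Lemma absorbing_avoid (Q : set T) : (forall x, Q x -> kop mu k (eindic Q) x = 1) ->
  forall n x, Q x -> avoid mu k (~` Q) n x = 1.
Proof.
move=> Qabs; elim=> [//|n IH] x Qx /=; rewrite setCK -(Qabs x Qx).
apply: eq_integral => y _; congr (_ * _).
have [Qy|nQy] := pselect (Q y); first by rewrite indicE mem_set// IH// mul1e.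
by rewrite indicE memNset// mul0e.
Qed.

Lemma irreducible_absorbing_null psi (Q : set T) : irr_measure mu k psi -> measurable Q ->
  (forall x, Q x -> kop mu k (eindic Q) x = 1) -> Q !=set0 -> psi (~` Q) = 0.
Proof.
move=> [_ psi_irr] mQ Qabs [x Qx]; apply/eqP; rewrite eq_le measure_ge0 andbT leNgt.
apply/negP => /(psi_irr _ (measurableC mQ))/(_ x).
suff -> : hitL mu k (~` Q) x = 0 by rewrite ltxx.
rewrite /hitL (_ : [set _ | _ in _] = [set 0]) ?ereal_sup1//.
apply/seteqP; split => [_ [n _ <-]|_ ->] /=; first by rewrite absorbing_avoid// subee.
by exists 0%N => //=; rewrite subee.
Qed.

Theorem invariant_pdf_unique p1 p2 : psi_irreducible mu k ->
  is_invariant_pdf mu k p1 -> is_invariant_pdf mu k p2 -> ae_eq mu setT p1 p2.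
Proof.
move=> [psi [psi_irr _]] ip1 ip2.
have [Q1 [mQ1 Q1lt Q1N Q1abs]] := invariant_pdf_lt_absorbing _ _ ip1 ip2.
have [Q2 [mQ2 Q2lt Q2N Q2abs]] := invariant_pdf_lt_absorbing _ _ ip2 ip1.
have [Q10|/set0P Q1n] := eqVneq Q1 set0.
  by move: Q1N; rewrite Q10 setD0; exact: pdf_ae_eq_of_negligible_lt ip1.1 ip2.1.
have [Q20|/set0P Q2n] := eqVneq Q2 set0.
  move: Q2N; rewrite Q20 setD0 => /(pdf_ae_eq_of_negligible_lt _ _ _ ip2.1 ip1.1).
  exact: ae_eq_sym.
(* Both [~` Q1] and [~` Q2] are psi-null, yet they cover [T]. *)
have Q12 : Q1 `&` Q2 = set0.
  apply/seteqP; split => // x [/Q1lt/= lt21 /Q2lt/= lt12].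
  by move: (lt_trans lt12 lt21); rewrite ltxx.
have psiT : psi setT = 0.
  rewrite -setC0 -Q12 setCI; apply/eqP; rewrite eq_le measure_ge0 andbT.
  apply: (le_trans (measureU2 _ (measurableC mQ1) (measurableC mQ2))).
  change (psi (~` Q1) + psi (~` Q2) <= 0).
  rewrite (irreducible_absorbing_null _ _ psi_irr mQ1 Q1abs Q1n).
  by rewrite (irreducible_absorbing_null _ _ psi_irr mQ2 Q2abs Q2n) adde0.
by move: psi_irr => [+ _]; rewrite psiT ltxx.
Qed.

End stochastic_density_kernel.

Definition dens_op {R : realType} {d1 d2} {T1 : measurableType d1} {T2 : measurableType d2}
    (mu : {measure set T2 -> \bar R}) (a : T1 -> T2 -> R) (f : T2 -> \bar R) (x : T1) : \bar R :=
  \int[mu]_y ((a x y)%:E * f y).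

Definition comp_kernel {R : realType} {d1 d2 d3} {T1 : measurableType d1}
    {T2 : measurableType d2} {T3 : measurableType d3} (mu : {measure set T2 -> \bar R})
    (a : T1 -> T2 -> R) (b : T2 -> T3 -> R) (x : T1) (z : T3) : \bar R :=
  \int[mu]_y (b y z * a x y)%:E.

Section density_operator.
Context {R : realType} {d1 d2 d3} {T1 : measurableType d1} {T2 : measurableType d2}
  {T3 : measurableType d3}.
Variables (mu2 : {sigma_finite_measure set T2 -> \bar R})
  (mu3 : {sigma_finite_measure set T3 -> \bar R}).
Variables (a : T1 -> T2 -> R) (b : T2 -> T3 -> R).
Hypothesis ma : measurable_fun setT (fun z : T1 * T2 => a z.1 z.2).
Hypothesis a0 : forall x y, (0 <= a x y)%R.
Hypothesis mb : measurable_fun setT (fun z : T2 * T3 => b z.1 z.2).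
Hypothesis b0 : forall y z, (0 <= b y z)%R.

Lemma measurable_dens_op f : measurable_fun setT f -> (forall y, 0 <= f y) ->
  measurable_fun setT (dens_op mu2 a f).
Proof.
move=> mf f0; apply: (measurable_fun_integral_snd mu2 (fun x y => (a x y)%:E * f y)).
- apply: emeasurable_funM; first exact/measurable_EFinP.
  exact: measurableT_comp mf measurable_snd.
- by move=> x y; apply: mule_ge0 => //; rewrite lee_fin.
Qed.

Lemma dens_op_ge0 f : (forall y, 0 <= f y) -> forall x, 0 <= dens_op mu2 a f x.
Proof. by move=> f0 x; apply: integral_ge0 => y _; apply: mule_ge0 => //; rewrite lee_fin. Qed.

Lemma integral_dens_op (nu : {sigma_finite_measure set T1 -> \bar R}) f :
  measurable_fun setT f -> (forall y, 0 <= f y) ->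
  \int[nu]_x dens_op mu2 a f x = \int[mu2]_y ((\int[nu]_x (a x y)%:E) * f y).
Proof.
move=> mf f0; apply: (fubini_tonelli_kernel nu mu2 (fun x y => (a x y)%:E)) => //.
exact/measurable_EFinP.
Qed.

Lemma measurable_comp_kernel :
  measurable_fun setT (fun z : T1 * T3 => comp_kernel mu2 a b z.1 z.2).
Proof.
apply: (measurable_fun_integral_snd mu2 (fun (z : T1 * T3) y => (b y z.2 * a z.1 y)%:E)).
  apply/measurable_EFinP; apply: measurable_funM.
  - exact: measurableT_comp mb
      (measurable_fun_pair measurable_snd (measurableT_comp measurable_snd measurable_fst)).
  - exact: measurableT_comp ma
      (measurable_fun_pair (measurableT_comp measurable_fst measurable_fst) measurable_snd).
by move=> z y; rewrite lee_fin mulr_ge0.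
Qed.

Lemma comp_kernel_ge0 x z : 0 <= comp_kernel mu2 a b x z.
Proof. by apply: integral_ge0 => y _; rewrite lee_fin mulr_ge0. Qed.

Lemma integral_comp_kernel f : measurable_fun setT f -> (forall z, 0 <= f z) ->
  forall x, \int[mu3]_z (comp_kernel mu2 a b x z * f z) = dens_op mu2 a (dens_op mu3 b f) x.
Proof.
move=> mf f0 x; have max : measurable_fun setT (fun y => (a x y)%:E).
  exact/measurable_EFinP/(measurableT_comp ma (pair1_measurable x)).
rewrite -(fubini_tonelli_kernel mu2 mu3 (fun y z => (b y z * a x y)%:E)) //.
- apply: eq_integral => y _; rewrite /dens_op -ge0_integralZl//.
  + by apply: eq_integral => z _; rewrite EFinM muleAC muleC.
  + by apply: emeasurable_funM => //; exact/measurable_EFinP/(measurableT_comp mb (pair1_measurable y)).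
  + by move=> z _; apply: mule_ge0 => //; rewrite lee_fin.
  + by rewrite lee_fin.
- apply/measurable_EFinP; apply: measurable_funM => //.
  exact: measurableT_comp ma (measurableT_comp (pair1_measurable x) measurable_fst).
- by move=> y z; rewrite lee_fin mulr_ge0.
Qed.

Lemma comp_kernel_pdf : (forall x, \int[mu2]_y (a x y)%:E = 1) ->
  (forall y, \int[mu3]_z (b y z)%:E = 1) -> forall x, \int[mu3]_z comp_kernel mu2 a b x z = 1.
Proof.
move=> a1 b1 x; transitivity (\int[mu3]_z (comp_kernel mu2 a b x z * cst 1 z)).
  by apply: eq_integral => z _; rewrite mule1.
rewrite integral_comp_kernel//.
rewrite /dens_op -[RHS](a1 x); apply: eq_integral => y _.
rewrite -[RHS]mule1 -[in RHS](b1 y); congr (_ * _).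
by apply: eq_integral => z _; rewrite mule1.
Qed.

End density_operator.

Section total_variation.
Context {R : realType} {d} {T : measurableType d}.
Implicit Types m : set T -> \bar R.

Lemma eq_tvd {m1 m1' m2 m2'} : (forall A, measurable A -> m1 A = m1' A) ->
  (forall A, measurable A -> m2 A = m2' A) -> tvd m1 m2 = tvd m1' m2'.
Proof.
move=> e1 e2; rewrite /tvd; congr ereal_sup; apply/seteqP.
by split => _ [n [A [mA tA UA ->]]]; exists n, A; split => //;
  apply: eq_bigr => i _; rewrite ?e1 ?e2 // -?e1 -?e2.
Qed.

Lemma tvd_ge_setC {m1 m2} {Q : set T} : measurable Q ->
  `|m1 Q - m2 Q| + `|m1 (~` Q) - m2 (~` Q)| <= tvd m1 m2.
Proof.
move=> mQ; apply: ereal_sup_ubound => /=.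
exists 2%N, (fun i : 'I_2 => if val i == 0%N then Q else ~` Q); split.
- by case=> -[|[|]]//= _; exact: measurableC.
- move=> i j _ _ [x [Aix Ajx]]; apply: val_inj; move: Aix Ajx.
  by case: i => -[|[|]]//= _; case: j => -[|[|]]//= _.
- apply/seteqP; split => // x _; have [Qx|nQx] := pselect (Q x).
  + by exists (Ordinal (isT : (0 < 2)%N)).
  + by exists (Ordinal (isT : (1 < 2)%N)).
- by rewrite !big_ord_recl big_ord0 adde0.
Qed.

Lemma indic_partition_sum n (A : 'I_n -> set T) : trivIset setT A ->
  \bigcup_(i in setT) A i = setT -> forall x, \sum_(i < n) (\1_(A i) x)%:E = 1 :> \bar R.
Proof.
move=> tA UA x; have [i _ Aix] : (\bigcup_(i in setT) A i) x by rewrite UA.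
rewrite (bigD1 i) //= big1 ?adde0 ?indicE ?mem_set// => j ji.
rewrite indicE memNset// => Ajx; move/eqP: ji; apply.
exact: tA (ex_intro _ x (conj Ajx Aix)).
Qed.

End total_variation.

Section dens_op_contraction.
Context {R : realType} {d1 d2} {T1 : measurableType d1} {T2 : measurableType d2}
  (mu1 : {measure set T1 -> \bar R}) (mu2 : {sigma_finite_measure set T2 -> \bar R}).
Variable a : T1 -> T2 -> R.
Hypothesis ma : measurable_fun setT (fun z : T1 * T2 => a z.1 z.2).
Hypothesis a0 : forall y x, (0 <= a y x)%R.
Hypothesis a1 : forall y, \int[mu2]_x (a y x)%:E = 1.

Let P A := dens_op mu2 a (eindic A).

Let measurable_P A : measurable A -> measurable_fun setT (P A).
Proof. by move=> mA; apply: measurable_dens_op => //; exact: measurable_eindic. Qed.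

Let P_ge0 A y : 0 <= P A y.
Proof. by apply: dens_op_ge0 => // x; rewrite lee_fin. Qed.

Let measurable_a y : measurable_fun setT (fun x => (a y x)%:E).
Proof. exact/measurable_EFinP/(measurableT_comp ma (pair1_measurable y)). Qed.

Let P_le1 A y : measurable A -> P A y <= 1.
Proof.
move=> mA; have may := measurable_a y; rewrite -(a1 y); apply: ge0_le_integral => //.
- by move=> x _; apply: mule_ge0; rewrite lee_fin.
- by apply: emeasurable_funM => //; exact: measurable_eindic.
- by move=> x _; rewrite -[leRHS]mule1 lee_wpmul2l ?lee_fin// indicE; case: (_ \in _).
Qed.

Lemma dens_op_partition_sum n (A : 'I_n -> set T2) : (forall i, measurable (A i)) ->
  trivIset setT A -> \bigcup_(i in setT) A i = setT ->
  forall y, \sum_(i < n) dens_op mu2 a (eindic (A i)) y = 1.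
Proof.
move=> mA tA UA y; rewrite -ge0_integral_sum//.
- rewrite -(a1 y); apply: eq_integral => x _.
  by rewrite -ge0_sume_distrr ?indic_partition_sum ?mule1// => i _; rewrite lee_fin.
- by move=> i; apply: emeasurable_funM; [exact: measurable_a|exact: measurable_eindic].
- by move=> i x _; apply: mule_ge0; rewrite lee_fin.
Qed.

Let integral_partition_sum n (A : 'I_n -> set T2) (f : T1 -> \bar R) (E : set T1) :
  (forall i, measurable (A i)) -> trivIset setT A -> \bigcup_(i in setT) A i = setT ->
  measurable E -> measurable_fun setT f -> (forall y, 0 <= f y) ->
  \sum_(i < n) \int[mu1]_(y in E) (f y * P (A i) y) = \int[mu1]_(y in E) f y.
Proof.
move=> mA tA UA mE mf f0; rewrite -ge0_integral_sum//.
- apply: eq_integral => y _.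
  by rewrite -ge0_sume_distrr ?dens_op_partition_sum ?mule1// => i _; exact: P_ge0.
- by move=> i; apply/measurable_funTS/emeasurable_funM => //; exact: measurable_P.
- by move=> i y _; exact: mule_ge0.
Qed.

Let pdf_integral_P_fin_num p E A : is_pdf mu1 p -> measurable E -> measurable A ->
  \int[mu1]_(y in E) (p y * P A y) \is a fin_num.
Proof.
move=> hp mE mA; apply: pdf_integral_mul_fin_num => //; first exact: measurable_P.
by move=> y; exact: P_le1.
Qed.

Let integral_P_setC p Q A : measurable Q -> measurable A ->
  measurable_fun setT p -> (forall y, 0 <= p y) ->
  \int[mu1]_y (p y * P A y) =
  \int[mu1]_(y in Q) (p y * P A y) + \int[mu1]_(y in ~` Q) (p y * P A y).
Proof.
move=> mQ mA mp p0; rewrite -ge0_integral_setU ?setUv//.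
- exact: measurableC.
- by apply: emeasurable_funM => //; exact: measurable_P.
- by move=> y _; exact: mule_ge0.
- by apply/disj_setPCl.
Qed.

Let abs_integral_P_sub_le p q Q A : is_pdf mu1 p -> is_pdf mu1 q ->
  measurable Q -> measurable A ->
  (forall y, Q y -> q y <= p y) -> (forall y, ~ Q y -> p y <= q y) ->
  `|\int[mu1]_y (p y * P A y) - \int[mu1]_y (q y * P A y)| <=
  (\int[mu1]_(y in Q) (p y * P A y) + \int[mu1]_(y in ~` Q) (q y * P A y)) -
  (\int[mu1]_(y in Q) (q y * P A y) + \int[mu1]_(y in ~` Q) (p y * P A y)).
Proof.
move=> hp hq mQ mA qp pq; have [mp p0 _] := hp; have [mq q0 _] := hq.
have mCQ := measurableC mQ.
rewrite (integral_P_setC _ _ _ mQ mA mp p0) (integral_P_setC _ _ _ mQ mA mq q0).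
apply: lee_abs_sub_split; try exact: pdf_integral_P_fin_num.
- apply: ge0_le_integral => //.
  + by move=> y _; exact: mule_ge0.
  + by apply/measurable_funTS/emeasurable_funM => //; exact: measurable_P.
  + by apply/measurable_funTS/emeasurable_funM => //; exact: measurable_P.
  + by move=> y Qy; apply: lee_wpmul2r => //; exact: qp.
- apply: ge0_le_integral => //.
  + by move=> y _; exact: mule_ge0.
  + by apply/measurable_funTS/emeasurable_funM => //; exact: measurable_P.
  + by apply/measurable_funTS/emeasurable_funM => //; exact: measurable_P.
  + by move=> y nQy; apply: lee_wpmul2r => //; exact: pq.
Qed.

Theorem tvd_dens_op_le p q : is_pdf mu1 p -> is_pdf mu1 q ->
  tvd (fun A => \int[mu1]_y (p y * dens_op mu2 a (eindic A) y))
      (fun A => \int[mu1]_y (q y * dens_op mu2 a (eindic A) y)) <=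
  tvd (fun B => \int[mu1]_(y in B) p y) (fun B => \int[mu1]_(y in B) q y).
Proof.
move=> hp hq; have [mp p0 _] := hp; have [mq q0 _] := hq.
set Q := [set y | q y < p y].
have mQ : measurable Q by rewrite -[Q]setTI; exact: measurable_lte.
have mCQ := measurableC mQ.
apply: (le_trans _ (tvd_ge_setC mQ)); apply: ge_ereal_sup => _ [n [A [mA tA UA ->]]].
pose pQ i := \int[mu1]_(y in Q) (p y * P (A i) y).
pose pN i := \int[mu1]_(y in ~` Q) (p y * P (A i) y).
pose qQ i := \int[mu1]_(y in Q) (q y * P (A i) y).
pose qN i := \int[mu1]_(y in ~` Q) (q y * P (A i) y).
apply: (@le_trans _ _ (\sum_(i < n) ((pQ i + qN i) - (qQ i + pN i)))).
  apply: lee_sum => i _; apply: abs_integral_P_sub_le => // y; first exact: ltW.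
  by rewrite leNgt => /negP.
have fin f E i : is_pdf mu1 f -> measurable E ->
    \int[mu1]_(y in E) (f y * P (A i) y) \is a fin_num.
  by move=> hf mE; exact: pdf_integral_P_fin_num.
rewrite fin_num_sumeB; try by move=> i; rewrite fin_numD !fin.
have sum_split f g : \sum_(i < n) (f i + g i) = \sum_(i < n) f i + \sum_(i < n) g i :> \bar R.
  exact: big_split.
rewrite (sum_split pQ qN) (sum_split qQ pN) /pQ /pN /qQ /qN !integral_partition_sum//.
by apply: lee_sub_split_abs; exact: pdf_integral_fin_num.
Qed.

End dens_op_contraction.

Section data_augmentation.
Context {R : realType} {dX dY} {X : measurableType dX} {Y : measurableType dY}
  (muX : {sigma_finite_measure set X -> \bar R})
  (muY : {sigma_finite_measure set Y -> \bar R})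
  (s : X -> Y -> R) (h : Y -> X -> R).
Hypothesis s_ge0 : forall x g, (0 <= s x g)%R.
Hypothesis h_ge0 : forall g x, (0 <= h g x)%R.
Hypothesis s_meas : measurable_fun setT (fun z : X * Y => s z.1 z.2).
Hypothesis h_meas : measurable_fun setT (fun z : X * Y => h z.2 z.1).
Hypothesis s_pdf : forall g, \int[muX]_x (s x g)%:E = 1.
Hypothesis h_pdf : forall x, \int[muY]_g (h g x)%:E = 1.

(* [H] and [S] are the two half-steps x |-> gamma ~ h~(. | x) and
   gamma |-> x ~ s~(. | gamma); [h_mix nu] below is the density of [nu H]. *)
Let kX := fun x x' => \int[muY]_g (s x' g * h g x)%:E.
Let kY := fun g g' => \int[muX]_x (h g' x * s x g)%:E.
Let hXY x g := h g x.
Let sYX g x := s x g.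
Let H := dens_op muY hXY.
Let S := dens_op muX sYX.

Let mhXY : measurable_fun setT (fun z : X * Y => hXY z.1 z.2).
Proof. exact: h_meas. Qed.

Let msYX : measurable_fun setT (fun z : Y * X => sYX z.1 z.2).
Proof. by have := measurableT_comp s_meas (@measurable_swap _ _ Y X). Qed.

Let hXY_ge0 x g : (0 <= hXY x g)%R. Proof. exact: h_ge0. Qed.
Let sYX_ge0 g x : (0 <= sYX g x)%R. Proof. exact: s_ge0. Qed.

Let mkX : measurable_fun setT (fun z : X * X => kX z.1 z.2).
Proof. exact: (measurable_comp_kernel muY hXY sYX mhXY hXY_ge0 msYX sYX_ge0). Qed.

Let mkY : measurable_fun setT (fun z : Y * Y => kY z.1 z.2).
Proof. exact: (measurable_comp_kernel muX sYX hXY msYX sYX_ge0 mhXY hXY_ge0). Qed.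

Let kX_ge0 x x' : 0 <= kX x x'.
Proof. exact: (comp_kernel_ge0 muY hXY sYX hXY_ge0 sYX_ge0). Qed.

Let kY_ge0 g g' : 0 <= kY g g'.
Proof. exact: (comp_kernel_ge0 muX sYX hXY sYX_ge0 hXY_ge0). Qed.

Let kY_pdf g : \int[muY]_g' kY g g' = 1.
Proof. exact: (comp_kernel_pdf muX muY sYX hXY msYX sYX_ge0 mhXY hXY_ge0 s_pdf h_pdf). Qed.

Let measurable_S f : measurable_fun setT f -> (forall x, 0 <= f x) -> measurable_fun setT (S f).
Proof. exact: (measurable_dens_op muX sYX msYX sYX_ge0). Qed.

Let S_ge0 f : (forall x, 0 <= f x) -> forall g, 0 <= S f g.
Proof. exact: (dens_op_ge0 muX sYX sYX_ge0). Qed.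

Lemma kop_kXE f : measurable_fun setT f -> (forall x, 0 <= f x) -> kop muX kX f = H (S f).
Proof.
move=> mf f0; apply/funext.
exact: (integral_comp_kernel muY muX hXY sYX mhXY hXY_ge0 msYX sYX_ge0).
Qed.

Lemma kop_kYE u : measurable_fun setT u -> (forall g, 0 <= u g) -> kop muY kY u = S (H u).
Proof.
move=> mu u0; apply/funext.
exact: (integral_comp_kernel muX muY sYX hXY msYX sYX_ge0 mhXY hXY_ge0).
Qed.

Lemma S_iter_kop n f : measurable_fun setT f -> (forall x, 0 <= f x) ->
  S (iter n (kop muX kX) f) = iter n (kop muY kY) (S f).
Proof.
move=> mf f0; elim: n => [//|n IH] /=.
have mK := measurable_iter_kop muX kX mkX kX_ge0 n f mf f0.
have K0 := iter_kop_ge0 muX kX kX_ge0 n f f0.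
rewrite kop_kXE// -kop_kYE -?IH//; first exact: measurable_S.
exact: S_ge0.
Qed.

Definition h_mix (nu : probability X R) (g : Y) := \int[nu]_x (h g x)%:E.

Lemma integral_H (nu : probability X R) F : measurable_fun setT F -> (forall g, 0 <= F g) ->
  \int[nu]_x H F x = \int[muY]_g (h_mix nu g * F g).
Proof. exact: (integral_dens_op muY hXY mhXY hXY_ge0). Qed.

Lemma is_pdf_h_mix (nu : probability X R) : is_pdf muY (h_mix nu).
Proof.
split.
- apply: (measurable_fun_integral_fst nu (fun x g => (h g x)%:E)); first exact/measurable_EFinP.
  by move=> x g; rewrite lee_fin.
- by move=> g; apply: integral_ge0 => x _; rewrite lee_fin.
transitivity (\int[muY]_g (h_mix nu g * cst 1 g)).
  by apply: eq_integral => g _; rewrite mule1.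
rewrite -integral_H//.
transitivity (\int[nu]_x (cst 1 x : \bar R)).
  apply: eq_integral => x _; rewrite -[RHS](h_pdf x).
  by apply: eq_integral => g _; rewrite mule1.
by rewrite integral_cst// mul1e; exact: probability_setT.
Qed.

Lemma mpow_kX_succE (nu : probability X R) n A : measurable A ->
  mpow muX kX nu n.+1 A =
  \int[muY]_g (iter n (dens_step muY kY) (h_mix nu) g * S (eindic A) g).
Proof.
move=> mA; have mI : measurable_fun setT (eindic A : X -> \bar R).
  exact: measurable_eindic.
have I0 x : 0 <= (\1_A x)%:E :> \bar R by rewrite lee_fin.
have [mh h0 _] := is_pdf_h_mix nu.
have mSA := measurable_S _ mI I0; have SA0 := S_ge0 _ I0.
rewrite /mpow /kpow iterS kop_kXE// ?S_iter_kop//; last first.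
- exact: iter_kop_ge0.
- exact: measurable_iter_kop.
rewrite integral_H; [|exact: measurable_iter_kop|exact: iter_kop_ge0].
exact: (integral_mul_iter_kop muY kY mkY kY_ge0 n _ _ mh h0 mSA SA0).
Qed.

Lemma integral_density_prob_h_mix (nu : probability X R) (F : Y -> R) :
  measurable_fun setT F -> (forall g, 0 <= F g)%R ->
  \int[density_prob (is_pdf_h_mix nu)]_g (F g)%:E = \int[nu]_x \int[muY]_g (F g * h g x)%:E.
Proof.
move=> mF F0; have [mh h0 _] := is_pdf_h_mix nu.
have mEF : measurable_fun setT (fun g => (F g)%:E) by exact/measurable_EFinP.
have EF0 g : 0 <= (F g)%:E by rewrite lee_fin.
rewrite (integral_density (density_prob (is_pdf_h_mix nu)) muY _ _ mh h0 (fun _ _ => erefl) mEF EF0).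
under eq_integral do rewrite muleC.
rewrite -integral_H//; apply: eq_integral => x _; apply: eq_integral => g _.
by rewrite EFinM muleC.
Qed.

Variables (Pi : probability X R) (tPi : probability Y R).
Hypothesis Pi_inv : kinvariant muX kX Pi.
Hypothesis tPi_inv : kinvariant muY kY tPi.
Hypothesis irrY : psi_irreducible muY kY.

Let tpi := invariant_density kY tPi.

Lemma h_mix_invariant_pdf : is_invariant_pdf muY kY (h_mix Pi).
Proof.
split; first exact: is_pdf_h_mix.
move=> B mB; have mB1 : measurable_fun setT (eindic B : Y -> \bar R).
  exact: measurable_eindic.
have B0 g : 0 <= (\1_B g)%:E :> \bar R by rewrite lee_fin.
have mHB := measurable_dens_op muY hXY mhXY hXY_ge0 _ mB1 B0.
have HB0 := dens_op_ge0 muY hXY hXY_ge0 _ B0.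
rewrite kop_kYE// -integral_H; [|exact: measurable_S|exact: S_ge0].
rewrite -kop_kXE// (integral_kop_invariant muX kX mkX kX_ge0 Pi Pi_inv)// integral_H//.
by rewrite integral_mkcond epatch_indic.
Qed.

Lemma PiE A : measurable A -> Pi A = \int[muY]_g (tpi g * S (eindic A) g).
Proof.
move=> mA; have mI : measurable_fun setT (eindic A : X -> \bar R).
  exact: measurable_eindic.
have I0 x : 0 <= (\1_A x)%:E :> \bar R by rewrite lee_fin.
have mSA := measurable_S _ mI I0.
have [mh _ _] := is_pdf_h_mix Pi.
have [[mtpi _ _] _] := invariant_density_invariant_pdf muY kY mkY kY_ge0 tPi tPi_inv.
rewrite -Pi_inv// (mpow_kX_succE Pi 0 _ mA).
transitivity (\int[muY]_g (S (eindic A) g * h_mix Pi g)).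
  by apply: eq_integral => g _; rewrite muleC.
transitivity (\int[muY]_g (S (eindic A) g * tpi g)); last first.
  by apply: eq_integral => g _; rewrite muleC.
apply: ae_eq_integral => //; [exact: emeasurable_funM|exact: emeasurable_funM|].
apply: ae_eqe_mul2l; apply: (invariant_pdf_unique muY kY mkY kY_ge0 kY_pdf) => //.
- exact: h_mix_invariant_pdf.
- exact: invariant_density_invariant_pdf.
Qed.

Lemma tvd_mpow_kX_succ_le (nu : probability X R) n :
  tvd (mpow muX kX nu n.+1) Pi <= tvd (mpow muY kY (density_prob (is_pdf_h_mix nu)) n) tPi.
Proof.
have hp := is_pdf_h_mix nu.
have hpn := is_pdf_iter_dens_step muY kY mkY kY_ge0 kY_pdf n _ hp.
have [htpi _] := invariant_density_invariant_pdf muY kY mkY kY_ge0 tPi tPi_inv.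
rewrite (eq_tvd (mpow_kX_succE nu n) PiE).
rewrite (eq_tvd (mpow_density_prob muY kY mkY kY_ge0 _ hp n)
  (invariant_densityE muY kY mkY kY_ge0 tPi tPi_inv)).
exact: (tvd_dens_op_le muY muX sYX msYX sYX_ge0 s_pdf _ _ hpn htpi).
Qed.

End data_augmentation.

Theorem proposition14 (R : realType)
  (dX dY : measure_display) (X : measurableType dX) (Y : measurableType dY)
  (muX : {sigma_finite_measure set X -> \bar R})
  (muY : {sigma_finite_measure set Y -> \bar R})
  (s : X -> Y -> R) (* s x g = s~(x | g) *)
  (h : Y -> X -> R) (* h g x = h~(g | x) *)
  (s_ge0 : forall x g, (0 <= s x g)%R)
  (h_ge0 : forall g x, (0 <= h g x)%R)
  (s_meas : measurable_fun setT (fun z : X * Y => s z.1 z.2))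
  (h_meas : measurable_fun setT (fun z : X * Y => h z.2 z.1))
  (s_pdf : forall g, \int[muX]_x (s x g)%:E = 1)
  (h_pdf : forall x, \int[muY]_g (h g x)%:E = 1)
  (Pi : probability X R) (tPi : probability Y R)
  (Pi_inv : kinvariant muX (fun x x' => \int[muY]_g (s x' g * h g x)%:E) Pi)
  (tPi_inv : kinvariant muY (fun g g' => \int[muX]_x (h g' x * s x g)%:E) tPi)
  (HX : harris_ergodic muX (fun x x' => \int[muY]_g (s x' g * h g x)%:E))
  (HY : harris_ergodic muY (fun g g' => \int[muX]_x (h g' x * s x g)%:E))
  (Rb : Y -> nat -> R)
  (Rb_gt0 : forall g m, (0 < Rb g m)%R)
  (Rb_meas : forall m, measurable_fun setT (fun g => Rb g m))
  (hyp : forall (tnu : probability Y R) (m : nat),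
     tvd (mpow muY (fun g g' => \int[muX]_x (h g' x * s x g)%:E) tnu m) tPi
       <= \int[tnu]_g (Rb g m)%:E) :
  forall (nu : probability X R) (m : nat), (1 <= m)%N ->
    tvd (mpow muX (fun x x' => \int[muY]_g (s x' g * h g x)%:E) nu m) Pi
      <= \int[nu]_x (\int[muY]_g (Rb g m.-1 * h g x)%:E).
Proof.
move=> nu [//|n] _; have [irrY _ _] := HY.
have Rb_ge0 g : (0 <= Rb g n)%R by exact: ltW.
rewrite -(integral_density_prob_h_mix muY h h_ge0 h_meas h_pdf nu _ (Rb_meas n) Rb_ge0).
exact: le_trans (tvd_mpow_kX_succ_le muX muY s h s_ge0 h_ge0 s_meas h_meas s_pdf h_pdf
  Pi tPi Pi_inv tPi_inv irrY nu n) (hyp _ n).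
Qed.
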